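(* Let $f_1,\dots,f_r\in\mathbb{R}[x]$ and $g_1,\dots,g_t\in\mathbb{R}[y]$ be real polynomials in $x\in\mathbb{R}^n$ and $y\in\mathbb{R}^m$, let $A\in\mathbb{R}^{m\times n}$, and set $h_j(x):=g_j(Ax)$. Let $C=\{x\in\mathbb{R}^n: f_i(x)\ge 0,\ i=1,\dots,r\}$, $H=\{x\in\mathbb{R}^n: h_j(x)\ge 0,\ j=1,\dots,t\}$, $d:=\max_{i,j}\{\lceil \deg(f_i)/2\rceil,\lceil\deg(h_j)/2\rceil\}$, and for $k\ge d$ $$S_k:=\Big\{x\in\mathbb{R}^n:\ \exists\, y\in\mathbb{R}^{\mathbb{N}^n_{2k}} \text{ with } y_0=1,\ x=(y_{e_1},\dots,y_{e_n}),\ L^{(k)}_{f_i}[y]\succeq 0\ (i=0,1,\dots,r),\ L^{(k)}_{h_j}[y]\succeq 0\ (j=1,\dots,t)\Big\},$$ where $f_0:=1$. Assume that all the polynomials $f_1,\dots,f_r,h_1,\dots,h_t$ (as polynomials in $x$) are sos-concave. Then $S_k=C\cap H$ for all $k\ge d$.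
   Context: $\mathbb{N}^n_{k}=\{\alpha\in\mathbb{N}^n: |\alpha|\le k\}$, and $\mathbb{R}^{\mathbb{N}^n_{2k}}$ is the space of real vectors $y=(y_\alpha)_{\alpha\in\mathbb{N}^n_{2k}}$. $[x]_s$ is the column vector of all monomials $x^\alpha$ with $|\alpha|\le s$. $e_i$ is the $i$-th unit vector and $0$ the zero multi-index. Localizing matrix: for a polynomial $f$ with $\deg f\le 2k$, let $s=k-\lceil\deg(f)/2\rceil$ and expand $f(x)[x]_s[x]_s^T=\sum_{\alpha\in\mathbb{N}^n_{2k}}x^\alpha F_\alpha$ with symmetric matrices $F_\alpha$; then $L^{(k)}_f[y]:=\sum_\alpha y_\alpha F_\alpha$. A polynomial $f\in\mathbb{R}[x]$ is sos-convex if there is a matrix polynomial $P(x)\in\mathbb{R}[x]^{\ell\times n}$ (some $\ell$) with $\nabla^2 f(x)=P(x)^TP(x)$; $f$ is sos-concave if $-f$ is sos-convex. No assumption is made that $C$ or $H$ has nonempty interior. *)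

From HB Require Import structures.
From mathcomp Require Import all_boot all_order all_algebra.
From mathcomp Require Import reals.
From mathcomp Require Import mpoly.

Set Implicit Arguments.
Unset Strict Implicit.
Unset Printing Implicit Defensive.

Import Order.TTheory GRing.Theory Num.Theory.
Local Open Scope ring_scope.

Section Defs.
Variable R : realType.

(* degree of a polynomial (msize p = 1 + total degree, 0 for p = 0);
   the zero polynomial gets degree 0 *)
Definition mdegree (n : nat) (p : {mpoly R[n]}) : nat := (msize p).-1.

Definition hdeg (n : nat) (p : {mpoly R[n]}) : nat := uphalf (mdegree p).

Definition psd (N : nat) (M : 'M[R]_N) : Prop :=
  M^T = M /\ forall v : 'cV[R]_N, 0 <= (v^T *m M *m v) 0 0.

(* Localizing matrix L^{(k)}_f[y], rows/columns indexed by the monomials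
   x^beta with |beta| <= s, s = k - ceil(deg f / 2), i.e. by the finite
   type 'X_{1..n < s.+1}.  Entry (beta,gamma) = sum_delta f_delta y_{delta+beta+gamma},
   i.e. the coefficientwise replacement x^alpha |-> y_alpha in
   f(x) [x]_s [x]_s^T. *)
Definition loc_index (n k : nat) (f : {mpoly R[n]}) : finType :=
  'X_{1..n < (k - hdeg f).+1}.

Definition locmat (n k : nat) (f : {mpoly R[n]}) (y : 'X_{1..n} -> R) :
    'M[R]_#|{: loc_index k f}| :=
  \matrix_(i, j)
    \sum_(a <- msupp f)
       f@_a * y (a + (enum_val i : loc_index k f)
                   + (enum_val j : loc_index k f))%MM.

Definition sos_convex (n : nat) (f : {mpoly R[n]}) : Prop :=
  exists (l : nat) (P : 'M[{mpoly R[n]}]_(l, n)),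
    forall i j : 'I_n,
      mderiv i (mderiv j f) = \sum_(q < l) P q i * P q j.

Definition sos_concave (n : nat) (f : {mpoly R[n]}) : Prop :=
  sos_convex (- f).

Definition lin_subst (m n : nat) (A : 'M[R]_(m, n)) : m.-tuple {mpoly R[n]} :=
  [tuple \sum_(l < n) A i l *: 'X_l | i < m].

Definition comp_lin (m n : nat) (A : 'M[R]_(m, n)) (g : {mpoly R[m]}) : {mpoly R[n]} :=
  comp_mpoly (lin_subst A) g.

Definition Sk (n r t k : nat) (f : 'I_r -> {mpoly R[n]}) (h : 'I_t -> {mpoly R[n]})
    (x : 'I_n -> R) : Prop :=
  exists y : 'X_{1..n} -> R,
    [/\ y 0%MM = 1,
        forall i : 'I_n, x i = y U_(i)%MM,
        psd (locmat k (1 : {mpoly R[n]}) y),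
        forall i : 'I_r, psd (locmat k (f i) y)
      & forall j : 'I_t, psd (locmat k (h j) y)].

Definition semialg (n r : nat) (p : 'I_r -> {mpoly R[n]}) (x : 'I_n -> R) : Prop :=
  forall i : 'I_r, 0 <= (p i).@[x].

End Defs.

From HB Require Import structures.
From mathcomp Require Import all_boot all_order all_algebra.
From mathcomp Require Import reals.
From mathcomp Require Import ssrcomplements mpoly.
From mathcomp Require Import polyrcf.
From mathcomp Require Import ring zify.

(* A point x of C ∩ H lies in S_k through its Dirac moment vector y_a = x^a:
   every localizing matrix is then f(x) times the Gram matrix of the monomial
   vector [x]_s.  Conversely, let y be feasible for S_k, x its first moments
   and L_y the Riesz functional p |-> sum_a p_a y_a.  Then L_y(q^2) >= 0 for
   deg q <= k and L_y(f) >= 0 for every constraint f.  Sos-convex g of degree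
   <= 2k satisfy Jensen's inequality g(x) <= L_y(g): the real polynomial
   T(s) = L_y(g(x + s(X - x))) has T(0) = g(x), T'(0) = 0 because
   L_y(X_i - x_i) = 0, and T'' >= 0 because with Hess g = P^T P, T''(s) is L_y
   of a sum of squares of degree <= k; hence T(1) >= T(0).  For g = -f this
   gives f(x) >= L_y(f) >= 0. *)

Set Implicit Arguments.
Unset Strict Implicit.
Unset Printing Implicit Defensive.

Import Order.TTheory GRing.Theory Num.Theory.
Local Open Scope ring_scope.

Section Riesz.
Variables (R : comNzRingType) (n : nat) (y : 'X_{1..n} -> R).
Implicit Types (p q : {mpoly R[n]}).

Definition riesz p : R := \sum_(m <- msupp p) p@_m * y m.

Lemma rieszE_wide p k : (msize p <= k)%N ->
  riesz p = \sum_(m : 'X_{1..n < k}) p@_m * y m.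
Proof.
move=> le_pk; rewrite /riesz (big_mksub 'X_{1..n < k}) ?msupp_uniq //=.
  by rewrite big_rmcond //= => m /memN_msupp_eq0 ->; rewrite mul0r.
by move=> m /msize_mdeg_lt /leq_trans; apply.
Qed.

Lemma riesz_is_zmod_morphism : zmod_morphism riesz.
Proof.
move=> p q; pose k := maxn (msize p) (msize q).
have lepk : (msize p <= k)%N by rewrite leq_maxl.
have leqk : (msize q <= k)%N by rewrite leq_maxr.
have lepqk : (msize (p - q) <= k)%N.
  by apply: leq_trans (msizeD_le _ _) _; rewrite msizeN geq_max lepk leqk.
rewrite !(rieszE_wide lepk, rieszE_wide leqk, rieszE_wide lepqk) -sumrB.
by apply: eq_bigr => m _; rewrite mcoeffB mulrBl.
Qed.

HB.instance Definition _ :=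
  GRing.isZmodMorphism.Build {mpoly R[n]} R riesz riesz_is_zmod_morphism.

Lemma rieszZ c p : riesz (c *: p) = c * riesz p.
Proof.
rewrite (rieszE_wide (msizeZ_le p c)) (rieszE_wide (leqnn _)) mulr_sumr.
by apply: eq_bigr => m _; rewrite mcoeffZ mulrA.
Qed.

Lemma rieszX m : riesz 'X_[m] = y m.
Proof. by rewrite /riesz msuppX big_seq1 mcoeffX eqxx mul1r. Qed.

Lemma rieszC c : riesz c%:MP = c * y 0%MM.
Proof. by rewrite -[c%:MP]mulr1 mul_mpolyC rieszZ -mpolyX0 rieszX. Qed.

End Riesz.

Section LocalizingMatrix.
Variables (R : realType) (n k : nat) (f : {mpoly R[n]}) (y : 'X_{1..n} -> R).
Local Notation I := (loc_index k f).

Lemma sum_enum_val (F : I -> R) :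
  \sum_(i < #|{: I}|) F (enum_val i) = \sum_(b : I) F b.
Proof. by rewrite -big_enum_val. Qed.

Lemma locmat_quadform (q : {mpoly R[n]}) : (msize q <= (k - hdeg f).+1)%N ->
  let v := \col_(i < #|{: I}|) q@_(enum_val i : 'X_{1..n}) in
  (v^T *m locmat k f y *m v) 0 0 = riesz y (f * (q * q)).
Proof.
move=> le_qk v.
have qE : q = \sum_(b : I) q@_b *: 'X_[b] := mpolywE le_qk.
have -> : f * (q * q) = \sum_(c : I) \sum_(b : I) \sum_(a <- msupp f)
    (f@_a * q@_b * q@_c) *: 'X_[a + b + c].
  rewrite {2}qE mulrA mulr_sumr; apply: eq_bigr => c _.
  rewrite {1}qE mulr_sumr mulr_suml; apply: eq_bigr => b _.
  rewrite {1}(mpolyE f) !mulr_suml; apply: eq_bigr => a _.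
  by rewrite !mpolyXD -!scalerAl -!scalerAr !scalerA -scalerAl scalerA mulrAC.
rewrite mxE; under eq_bigr do rewrite !mxE.
under eq_bigr do under eq_bigr do rewrite !mxE.
rewrite (sum_enum_val (fun c => (\sum_(j < #|{: I}|) q@_(enum_val j : 'X_{1..n})
  * \sum_(a <- msupp f) f@_a * y (a + enum_val j + c)) * q@_c)).
rewrite raddf_sum /=; apply: eq_bigr => c _.
rewrite (sum_enum_val (fun b => q@_b * \sum_(a <- msupp f) f@_a * y (a + b + c))).
rewrite mulr_suml raddf_sum /=; apply: eq_bigr => b _.
rewrite mulr_sumr mulr_suml raddf_sum /=; apply: eq_bigr => a _.
by rewrite rieszZ rieszX; ring.
Qed.

Lemma locmat_psd_riesz : psd (locmat k f y) ->
  forall q, (msize q <= (k - hdeg f).+1)%N -> 0 <= riesz y (f * (q * q)).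
Proof. by move=> [_ psdM] q /locmat_quadform <-. Qed.

End LocalizingMatrix.

Section Dirac.
Variable R : realType.

Lemma psd_scale_outer (N : nat) (c : R) (u : 'cV[R]_N) :
  0 <= c -> psd (c *: (u *m u^T)).
Proof.
move=> c_ge0; split; first by rewrite linearZ /= trmx_mul trmxK.
move=> v; have -> : v^T *m (c *: (u *m u^T)) *m v
    = c *: ((u^T *m v)^T *m (u^T *m v)).
  by rewrite trmx_mul trmxK -scalemxAr -scalemxAl !mulmxA.
by rewrite mxE mulr_ge0 // mxE big_ord1 mxE -expr2 sqr_ge0.
Qed.

Variables (n k : nat) (f : {mpoly R[n]}) (x : 'I_n -> R).
Let u := \col_(i < #|{: loc_index k f}|) mmap1 x (enum_val i : 'X_{1..n}).

Lemma locmat_dirac : locmat k f (mmap1 x) = f.@[x] *: (u *m u^T).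
Proof.
have mmap1D a b : mmap1 x (a + b)%MM = mmap1 x a * mmap1 x b.
  by apply: commr_mmap1_M => i z; apply: mulrC.
apply/matrixP => i j; rewrite !mxE big_ord1 !mxE mevalE !mulr_suml.
by apply: eq_bigr => a _; rewrite !mmap1D !mulrA.
Qed.

Lemma locmat_dirac_psd : 0 <= f.@[x] -> psd (locmat k f (mmap1 x)).
Proof. by move=> f_ge0; rewrite locmat_dirac; apply: psd_scale_outer. Qed.

End Dirac.

Section Msize.
Variable n : nat.

Lemma msize_le_supp (R : nzRingType) (p : {mpoly R[n]}) b :
  (forall m, m \in msupp p -> mdeg m < b)%N -> (msize p <= b)%N.
Proof.
move=> supp_lt; rewrite msizeE big_seq.
by apply: (big_ind (fun z => z <= b)%N) => // u v; rewrite geq_max => ->.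
Qed.

Lemma msize_mderiv (R : nzRingType) (p : {mpoly R[n]}) i :
  (msize p^`M(i) <= (msize p).-1)%N.
Proof.
apply: msize_le_supp => m; rewrite mcoeff_msupp mcoeff_deriv.
have [->|nz] := eqVneq p@_(m + U_(i))%MM 0; first by rewrite mul0rn eqxx.
move=> _; have /msize_mdeg_lt : (m + U_(i))%MM \in msupp p by rewrite mcoeff_msupp.
by rewrite mdegD mdeg1; lia.
Qed.

Section Idomain.
Variable R : idomainType.
Implicit Types (p q : {mpoly R[n]}).

Lemma msizeM_le_pred p q : (msize (p * q) <= (msize p + msize q).-1)%N.
Proof.
have [->|nzp] := eqVneq p 0; first by rewrite mul0r msize0.
have [->|nzq] := eqVneq q 0; first by rewrite mulr0 msize0.
by rewrite msizeM.
Qed.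

Lemma msize_affine_exp p e : (msize p <= 2)%N -> (msize (p ^+ e) <= e.+1)%N.
Proof.
move=> le_p2; elim: e => [|e IH]; first by rewrite expr0 msize1.
by rewrite exprS; apply: leq_trans (msizeM_le_pred _ _) _; lia.
Qed.

Lemma msize_mmap_affine (w : 'I_n -> {mpoly R[n]}) p :
  (forall i, msize (w i) <= 2)%N -> (msize (mmap (@mpolyC n R) w p) <= msize p)%N.
Proof.
move=> le_w2; have le_mmap1 m : (msize (mmap1 w m) <= (mdeg m).+1)%N.
  rewrite /mmap1 mdegE; elim/big_rec2: _ => [|i r d _ IH]; first by rewrite msize1.
  apply: leq_trans (msizeM_le_pred _ _) _.
  by rewrite -subn1 leq_subLR add1n -addSn -addnS leq_add ?msize_affine_exp.
apply: leq_trans (msize_sum _ _ _) _; rewrite big_seq.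
apply: (big_ind (fun z => z <= msize p)%N) => // [u v|m m_supp].
  by rewrite geq_max => ->.
rewrite mul_mpolyC; apply: leq_trans (msizeZ_le _ _) _.
exact: leq_trans (le_mmap1 m) (msize_mdeg_lt m_supp).
Qed.

End Idomain.

Lemma msize_le_sum_sqr (R : realDomainType) l (P : 'I_l -> {mpoly R[n]}) q0 :
  ((msize (P q0)).*2 <= (msize (\sum_q P q * P q)).+1)%N.
Proof.
have [->|nz0] := eqVneq (P q0) 0; first by rewrite msize0.
have [q1 nz1 maxq1] := @arg_maxP _ _ _ q0 (fun q => P q != 0)
   (fun q => mlead (P q)) nz0.
set M := mlead (P q1).
have coefE : (\sum_q P q * P q)@_(M + M)%MM =
   \sum_(q | (P q != 0) && (mlead (P q) == M)) mleadc (P q) ^+ 2.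
  rewrite raddf_sum /= [RHS]big_mkcond /=; apply: eq_bigr => q _.
  have [->|nzq] := eqVneq (P q) 0; first by rewrite mul0r raddf0.
  case: eqP => [<-|neM] /=; first by rewrite mleadcM expr2.
  apply: mcoeff_gt_mlead; apply: le_lt_trans (mleadM_le _ _) _.
  have ltM : (mlead (P q) < M)%O by rewrite lt_neqAle; apply/andP; split;
     [apply/eqP | exact: maxq1].
  by apply: (lt_trans (y := (M + mlead (P q))%MM)); rewrite ?ltmc_add2l ?ltmc_add2r.
have coef_gt0 : 0 < (\sum_q P q * P q)@_(M + M)%MM.
  rewrite coefE (bigD1 q1) /=; last by rewrite nz1 eqxx.
  apply: (@lt_le_trans _ _ (mleadc (P q1) ^+ 2)).
    by rewrite lt_def sqrf_eq0 mleadc_eq0 nz1 sqr_ge0.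
  by rewrite lerDl; apply: sumr_ge0 => q _; apply: sqr_ge0.
have /msize_mdeg_lt : (M + M)%MM \in msupp (\sum_q P q * P q).
  by rewrite mcoeff_msupp gt_eqF.
have : (mdeg (mlead (P q0)) <= mdeg M)%N by apply/lemc_mdeg/maxq1.
by rewrite mdegD -(mlead_deg nz0); lia.
Qed.

Lemma msize_hessian_factor (R : realDomainType) k (g : {mpoly R[n]}) l
    (P : 'M[{mpoly R[n]}]_(l, n)) :
  (forall i j, g^`M(j)^`M(i) = \sum_(q < l) P q i * P q j) ->
  (msize g <= k.*2.+1)%N -> forall q i, (msize (P q i) <= k)%N.
Proof.
move=> hessP le_gk q i; have := msize_le_sum_sqr (fun q => P q i) q.
rewrite -hessP; have := msize_mderiv g^`M(i) i; have := msize_mderiv g i; lia.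
Qed.

End Msize.

Section ChainRule.
Variables (n : nat) (R : nzRingType) (S : comNzRingType).
Variables (f : {rmorphism R -> S}) (t : 'I_n -> {poly S}).
Let polyCf : {rmorphism R -> {poly S}} := polyC \o f.
Local Notation subst := (mmap polyCf t).

Lemma deriv_mmap (p : {mpoly R[n]}) :
  (subst p)^`() = \sum_i subst p^`M(i) * (t i)^`().
Proof.
pose chain r := (subst r)^`() = \sum_i subst r^`M(i) * (t i)^`().
have chainD u v : chain u -> chain v -> chain (u + v).
  rewrite /chain raddfD derivD => -> ->; rewrite -big_split /=.
  by apply: eq_bigr => i _; rewrite mderivD raddfD mulrDl.
have chainM u v : chain u -> chain v -> chain (u * v).
  rewrite /chain rmorphM derivM => -> ->; rewrite mulr_suml mulr_sumr -big_split.
  by apply: eq_bigr => i _; rewrite mderivM raddfD /= !rmorphM; ring.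
have chainC c : chain c%:MP.
  rewrite /chain mmapC derivC big1 // => i _.
  by rewrite mderivC raddf0 mul0r.
have chainX i : chain 'X_i.
  rewrite /chain mmapX mmap1U (bigD1 i) // big1 => [|j /negbTE nij].
    rewrite mderivX mnm1E eqxx -[X in (X - _)%MM]add0m addmK.
    by rewrite mpolyX0 scale1r rmorph1 mul1r /= addr0.
  by rewrite mderivX mnm1E eq_sym nij scale0r mmap0 mul0r.
elim/mpolyind: p => [|c m q _ _ IH]; first by rewrite -mpolyC0; apply: (chainC).
apply: chainD => //; rewrite -mul_mpolyC; apply: (chainM) => //.
rewrite mpolyXE_id; apply: (big_ind chain) => [||i _].
- by rewrite -mpolyC1; apply: (chainC).
- exact: chainM.
elim: (m i) => [|e IHe]; first by rewrite expr0 -mpolyC1; apply: chainC.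
by rewrite exprS; apply: chainM.
Qed.

End ChainRule.

Section MmapComp.
Variables (n : nat) (R : nzRingType).

Lemma rmorph_mmap (S S' : comNzRingType) (f : R -> S) (rho : {rmorphism S -> S'})
    (h : 'I_n -> S) (p : {mpoly R[n]}) :
  rho (mmap f h p) = mmap (rho \o f) (rho \o h) p.
Proof.
rewrite rmorph_sum; apply: eq_bigr => m _; rewrite rmorphM rmorph_prod.
by congr (_ * _); apply: eq_bigr => i _; rewrite rmorphXn.
Qed.

Lemma eq_mmap (S : nzRingType) (f1 f2 : R -> S) (h1 h2 : 'I_n -> S) (p : {mpoly R[n]}) :
  f1 =1 f2 -> h1 =1 h2 -> mmap f1 h1 p = mmap f2 h2 p.
Proof.
move=> eq_f eq_h; apply: eq_bigr => m _.
by rewrite eq_f (mmap1_eq _ eq_h).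
Qed.

End MmapComp.

Lemma poly_tangent_le (R : rcfType) (T : {poly R}) a b : a <= b ->
  (forall s, 0 <= T^`()^`().[s]) -> T.[a] + T^`().[a] * (b - a) <= T.[b].
Proof.
rewrite le_eqVlt => /predU1P[-> _|lt_ab convT]; first by rewrite subrr mulr0 addr0.
have [c c_ab mvt] := poly_mvt T lt_ab.
have /andP[lt_ac lt_cb] : (a < c) && (c < b) by move: c_ab; rewrite in_itv.
have T'_ac : T^`().[a] <= T^`().[c].
  apply: (@ler_hornerW _ a b) => [s _|||]; first exact: convT.
  - by rewrite in_itv /= lexx ltW.
  - by rewrite in_itv /= !ltW.
  - exact: ltW.
by rewrite -lerBrDl mvt ler_wpM2r // subr_ge0 ltW.
Qed.

Lemma gram_quadformE (T : comNzRingType) l N (A : 'I_l -> 'I_N -> T) (d : 'I_N -> T) :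
  \sum_j (\sum_i (\sum_q A q i * A q j) * d i) * d j =
  \sum_q (\sum_i A q i * d i) * (\sum_i A q i * d i).
Proof.
under eq_bigr do rewrite mulr_suml.
under eq_bigr do under eq_bigr do rewrite !mulr_suml.
under [RHS]eq_bigr do rewrite mulr_suml.
under [RHS]eq_bigr do under eq_bigr do rewrite mulr_sumr.
rewrite exchange_big /=; under eq_bigr do rewrite exchange_big /=.
rewrite exchange_big /=; apply: eq_bigr => q _; apply: eq_bigr => i _.
by apply: eq_bigr => j _; ring.
Qed.

Section Jensen.
Variables (R : realType) (n : nat) (y : 'X_{1..n} -> R).
Local Notation MP := {mpoly R[n]}.
Local Notation L := (riesz y).

Definition first_moments (i : 'I_n) : R := y U_(i)%MM.
Local Notation x := first_moments.

Let dlt i : MP := 'X_i - (x i)%:MP.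
Let seg i : {poly MP} := ((x i)%:MP)%:P + (dlt i)%:P * 'X.
Let coefC : {rmorphism R -> {poly MP}} := polyC \o @mpolyC n R.
(* [path p] is p(x + s(X - x)) as a polynomial in s over R[X]. *)
Local Notation path := (mmap coefC seg).

Lemma seg_deriv i : (seg i)^`() = (dlt i)%:P.
Proof. by rewrite derivD derivC add0r deriv_mulC derivX mulr1. Qed.

Lemma horner_seg i c : (seg i).[c] = (x i)%:MP + dlt i * c.
Proof. by rewrite hornerD hornerC hornerM hornerC hornerX. Qed.

Lemma horner_path c p : (path p).[c] = mmap (@mpolyC n R) (fun i => (seg i).[c]) p.
Proof.
rewrite -[_.[c]]/(horner_eval c (path p)) rmorph_mmap.
by apply: eq_mmap => // a; rewrite /= /horner_eval hornerC.
Qed.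

Lemma path_at0 p : (path p).[0] = (p.@[x])%:MP.
Proof.
rewrite horner_path /meval rmorph_mmap.
by apply: eq_mmap => // i; rewrite /= horner_seg mulr0 addr0.
Qed.

Lemma path_at1 p : (path p).[1] = p.
Proof.
rewrite horner_path -[RHS]comp_mpoly_id.
apply: eq_mmap => // i; rewrite horner_seg tnth_mktuple mulr1.
by rewrite addrC subrK.
Qed.

Lemma horner_map_riesz (Q : {poly MP}) s : (map_poly L Q).[s] = L Q.[s%:MP].
Proof.
have le_size : (size (map_poly L Q) <= size Q)%N by apply: size_poly.
rewrite (horner_coef_wide _ le_size) horner_coef raddf_sum /=.
apply: eq_bigr => i _; rewrite coef_map /= -rmorphXn /=.
by rewrite [_ * (s ^+ i)%:MP]mulrC mul_mpolyC rieszZ mulrC.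
Qed.

Lemma deriv_map_riesz (Q : {poly MP}) : (map_poly L Q)^`() = map_poly L Q^`().
Proof. by apply/polyP => i; rewrite coef_deriv !coef_map coef_deriv raddfMn. Qed.

Lemma msize_dlt i : (msize (dlt i) <= 2)%N.
Proof.
apply: leq_trans (msizeD_le _ _) _; rewrite msizeN msizeX mdeg1 msizeC geq_max.
by case: (_ != 0).
Qed.

Lemma msize_horner_seg i s : (msize (seg i).[s%:MP] <= 2)%N.
Proof.
rewrite horner_seg mulrC mul_mpolyC; apply: leq_trans (msizeD_le _ _) _.
rewrite geq_max msizeC (leq_trans (msizeZ_le _ _)) ?msize_dlt ?andbT //.
by case: (_ != 0).
Qed.

Hypothesis y0 : y 0%MM = 1.
Variable k : nat.
Hypothesis riesz_sqr_ge0 : forall q : MP, (msize q <= k.+1)%N -> 0 <= L (q * q).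

Lemma riesz_dlt i : L (dlt i) = 0.
Proof. by rewrite raddfB /= rieszX rieszC y0 mulr1 subrr. Qed.

Lemma riesz_path_deriv2_ge0 g : sos_convex g -> (msize g <= k.*2.+1)%N ->
  forall s, 0 <= L ((path g)^`()^`()).[s%:MP].
Proof.
move=> [l [P hessP]] le_gk s; set c := s%:MP.
have pathM u v : path (u * v) = path u * path v by exact: rmorphM.
have deriv_path p : (path p)^`() = \sum_i path p^`M(i) * (dlt i)%:P.
  by rewrite deriv_mmap; apply: eq_bigr => i _; rewrite seg_deriv.
pose a q i := (path (P q i)).[c].
have -> : ((path g)^`()^`()).[c] =
    \sum_q (\sum_i a q i * dlt i) * (\sum_i a q i * dlt i).
  rewrite -gram_quadformE deriv_path raddf_sum /= horner_sum.
  apply: eq_bigr => j _; rewrite derivM derivC mulr0 addr0 deriv_path.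
  rewrite hornerM hornerC horner_sum; congr (_ * _); apply: eq_bigr => i _.
  rewrite hornerM hornerC hessP raddf_sum /= horner_sum; congr (_ * _).
  by apply: eq_bigr => q _; rewrite pathM hornerM.
rewrite raddf_sum /=; apply: sumr_ge0 => q _; apply: riesz_sqr_ge0.
apply: leq_trans (msize_sum _ _ _) _; rewrite big_seq.
apply: (big_ind (fun z => z <= k.+1)%N) => // [u v|i _]; first by rewrite geq_max => ->.
apply: leq_trans (msizeM_le_pred _ _) _.
have le_a : (msize (a q i) <= k)%N.
  rewrite /a horner_path; apply: leq_trans (msize_hessian_factor hessP le_gk q i).
  by apply: msize_mmap_affine => j; apply: msize_horner_seg.
by rewrite -subn1 leq_subLR add1n -addn2 leq_add ?msize_dlt.
Qed.

Lemma riesz_jensen g : sos_convex g -> (msize g <= k.*2.+1)%N -> g.@[x] <= L g.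
Proof.
move=> convg le_gk; set T := map_poly L (path g).
have T0 : T.[0] = g.@[x] by rewrite horner_map_riesz path_at0 rieszC y0 mulr1.
have T1 : T.[1] = L g by rewrite horner_map_riesz path_at1.
have T'0 : T^`().[0] = 0.
  rewrite deriv_map_riesz horner_map_riesz deriv_mmap horner_sum raddf_sum /=.
  rewrite big1 // => i _; rewrite seg_deriv hornerM hornerC mpolyC0 path_at0.
  by rewrite mul_mpolyC rieszZ riesz_dlt mulr0.
have T''_ge0 s : 0 <= T^`()^`().[s].
  by rewrite !deriv_map_riesz horner_map_riesz riesz_path_deriv2_ge0.
by have := poly_tangent_le (@ler01 R) T''_ge0; rewrite T0 T1 T'0 mul0r addr0.
Qed.

End Jensen.

Lemma msize_le_of_hdeg (R : realType) n (p : {mpoly R[n]}) k :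
  (hdeg p <= k)%N -> (msize p <= k.*2.+1)%N.
Proof.
rewrite /hdeg /mdegree uphalf_half; have := odd_double_half (msize p).-1.
by case: (odd _) => /=; lia.
Qed.

Lemma psd_locmat_sos_concave_ge0 (R : realType) n (y : 'X_{1..n} -> R) k
    (p : {mpoly R[n]}) :
  y 0%MM = 1 -> psd (locmat k 1 y) -> psd (locmat k p y) ->
  (hdeg p <= k)%N -> sos_concave p -> 0 <= p.@[first_moments y].
Proof.
move=> y0 psd1 psdp le_pk concp.
have riesz_sqr_ge0 q : (msize q <= k.+1)%N -> 0 <= riesz y (q * q).
  move=> le_qk; rewrite -[q * q]mul1r; apply: (locmat_psd_riesz psd1).
  by rewrite /hdeg /mdegree msize1 subn0.
have riesz_ge0 : 0 <= riesz y p.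
  by have := locmat_psd_riesz (q := 1) psdp; rewrite !mulr1 msize1; apply.
have := riesz_jensen y0 riesz_sqr_ge0 concp; rewrite msizeN.
move=> /(_ (msize_le_of_hdeg le_pk)); rewrite mevalN raddfN lerN2.
exact: le_trans.
Qed.

Theorem theorem2p7 (R : realType) (n m r t : nat)
    (f : 'I_r -> {mpoly R[n]}) (g : 'I_t -> {mpoly R[m]}) (A : 'M[R]_(m, n)) :
  let h := fun j : 'I_t => comp_lin A (g j) in
  let d := maxn (\max_(i < r) hdeg (f i)) (\max_(j < t) hdeg (h j)) in
  (forall i : 'I_r, sos_concave (f i)) ->
  (forall j : 'I_t, sos_concave (h j)) ->
  forall k : nat, (d <= k)%N ->
    forall x : 'I_n -> R, Sk k f h x <-> (semialg f x /\ semialg h x).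
Proof.
move=> h d concf conch k; rewrite geq_max => /andP[le_fk le_hk] x; split.
  case=> y [y0 xE psd1 psdf psdh].
  split=> i; rewrite (meval_eq _ xE).
    apply: psd_locmat_sos_concave_ge0 y0 psd1 (psdf i) _ (concf i).
    exact: leq_trans (leq_bigmax i) le_fk.
  apply: psd_locmat_sos_concave_ge0 y0 psd1 (psdh i) _ (conch i).
  exact: leq_trans (leq_bigmax i) le_hk.
case=> Cf Ch; exists (mmap1 x); split.
- exact: mmap11.
- by move=> i; rewrite mmap1U.
- by apply: locmat_dirac_psd; rewrite meval1.
- by move=> i; apply: locmat_dirac_psd.
- by move=> j; apply: locmat_dirac_psd.
Qed.
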